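(* There exists a function $f:\mathbb{R}^{\mathbb{Z}_<}\to\mathbb{R}^{\mathbb{Z}_<}$ that satisfies $\mathrm{ED}_{\mathrm{CLASS}}$ but does not satisfy $\mathrm{ED}$.
   Context: $\mathbb{R}^{\mathbb{Z}_<}$ is the set of formal series $\sum_{i\ge -k}a_i\epsilon^i$ ($k\in\mathbb{N}\cup\{0\}$, $a_i\in\mathbb{R}$), with coefficientwise addition, Cauchy-product multiplication and lexicographic order; $|\cdot|$ is the associated absolute value. A function $f$ satisfies $\mathrm{ED}_{\mathrm{CLASS}}$ iff at every point $\mathbf{a}$ of its domain, for every $n\in\mathbb{N}$ there is $m\in\mathbb{N}$ such that $|f(\mathbf{x})-f(\mathbf{a})|<1/n$ whenever $|\mathbf{x}-\mathbf{a}|<1/m$. It satisfies $\mathrm{ED}$ iff at every point $\mathbf{c}$, for every $\iota_1\in\mathbb{R}^{\mathbb{Z}_<}$ with $\iota_1>0$ there is $\iota_2\in\mathbb{R}^{\mathbb{Z}_<}$ with $\iota_2>0$ such that $|f(\mathbf{x})-f(\mathbf{c})|<\iota_1$ whenever $|\mathbf{x}-\mathbf{c}|<\iota_2$. *)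

(* the non-Archimedean ordered group R^{Z_<} of formal
   Laurent series  sum_{i >= -k} a_i eps^i  with real coefficients. *)
From Stdlib Require Import Reals ZArith Lia Lra ClassicalDescription.
Open Scope R_scope.

Record LS : Type := mkLS {
  coef : Z -> R;
  coef_lb : exists k : Z, forall i : Z, (i < k)%Z -> coef i = 0 }.

Lemma LS_cst_lb (r : R) :
  exists k : Z, forall i : Z, (i < k)%Z -> (if Z.eqb i 0 then r else 0) = 0.
Proof.
  exists 0%Z; intros i Hi. destruct (Z.eqb_spec i 0); [lia|reflexivity].
Qed.

Definition LS_cst (r : R) : LS := mkLS (fun i => if Z.eqb i 0 then r else 0) (LS_cst_lb r).

Definition LS_zero : LS := LS_cst 0.

Lemma LS_opp_lb (x : LS) :
  exists k : Z, forall i : Z, (i < k)%Z -> - coef x i = 0.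
Proof.
  destruct (coef_lb x) as [k Hk]; exists k; intros i Hi; rewrite Hk; [lra|exact Hi].
Qed.

Definition LS_opp (x : LS) : LS := mkLS (fun i => - coef x i) (LS_opp_lb x).

Lemma LS_add_lb (x y : LS) :
  exists k : Z, forall i : Z, (i < k)%Z -> coef x i + coef y i = 0.
Proof.
  destruct (coef_lb x) as [k1 H1]; destruct (coef_lb y) as [k2 H2].
  exists (Z.min k1 k2); intros i Hi; rewrite H1, H2; [lra|lia|lia].
Qed.

Definition LS_add (x y : LS) : LS := mkLS (fun i => coef x i + coef y i) (LS_add_lb x y).
Definition LS_sub (x y : LS) : LS := LS_add x (LS_opp y).

Definition LS_pos (x : LS) : Prop :=
  exists n : Z, 0 < coef x n /\ forall m : Z, (m < n)%Z -> coef x m = 0.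

Definition LS_lt (x y : LS) : Prop := LS_pos (LS_sub y x).
Definition LS_le (x y : LS) : Prop := LS_lt x y \/ x = y.

Definition LS_abs (x : LS) : LS :=
  if excluded_middle_informative (LS_le LS_zero x) then x else LS_opp x.

Definition ED_CLASS (f : LS -> LS) : Prop :=
  forall a : LS, forall n : nat, (0 < n)%nat ->
    exists m : nat, (0 < m)%nat /\
      forall x : LS,
        LS_lt (LS_abs (LS_sub x a)) (LS_cst (/ INR m)) ->
        LS_lt (LS_abs (LS_sub (f x) (f a))) (LS_cst (/ INR n)).

Definition ED (f : LS -> LS) : Prop :=
  forall c : LS, forall i1 : LS, LS_lt LS_zero i1 ->
    exists i2 : LS, LS_lt LS_zero i2 /\
      forall x : LS,
        LS_lt (LS_abs (LS_sub x c)) i2 ->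
        LS_lt (LS_abs (LS_sub (f x) (f c))) i1.

(* The step function with an infinitesimal jump, x |-> eps if x > 0 and 0
   otherwise, is classically continuous because its oscillation eps is smaller
   than every real 1/n.  It is not continuous in the sense of R^{Z_<}: at 0,
   with tolerance eps, every positive delta admits x = delta/2 > 0, where the
   jump is exactly eps. *)
From Stdlib Require Import Reals ZArith Lia Lra ClassicalDescription.
From Stdlib Require Import FunctionalExtensionality ProofIrrelevance.
Open Scope R_scope.

Lemma LS_ext (x y : LS) : (forall i, coef x i = coef y i) -> x = y.
Proof.
  destruct x as [cx lbx], y as [cy lby]; simpl; intros Hxy.
  assert (cx = cy) as <- by (apply functional_extensionality; exact Hxy).
  f_equal; apply proof_irrelevance.
Qed.

Lemma LS_sub0 (x : LS) : LS_sub x LS_zero = x.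
Proof. apply LS_ext; intros i; simpl; destruct (Z.eqb i 0); lra. Qed.

Lemma LS_subxx (x : LS) : LS_sub x x = LS_zero.
Proof. apply LS_ext; intros i; simpl; destruct (Z.eqb i 0); lra. Qed.

Lemma LS_lt0 (x : LS) : LS_lt LS_zero x <-> LS_pos x.
Proof. unfold LS_lt; rewrite LS_sub0; tauto. Qed.

Lemma LS_pos_zero : ~ LS_pos LS_zero.
Proof. intros [n [Hn _]]; simpl in Hn; destruct (Z.eqb n 0); lra. Qed.

Lemma LS_lt_irrefl (x : LS) : ~ LS_lt x x.
Proof. unfold LS_lt; rewrite LS_subxx; exact LS_pos_zero. Qed.

Lemma LS_abs_pos (x : LS) : LS_pos x -> LS_abs x = x.
Proof.
  intros Hx; unfold LS_abs.
  destruct (excluded_middle_informative _) as [_ | Hnle]; [reflexivity |].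
  exfalso; apply Hnle; left; apply LS_lt0, Hx.
Qed.

Lemma LS_half_lb (x : LS) :
  exists k : Z, forall i : Z, (i < k)%Z -> coef x i / 2 = 0.
Proof.
  destruct (coef_lb x) as [k Hk]; exists k; intros i Hi; rewrite Hk; [lra | exact Hi].
Qed.

Definition LS_half (x : LS) : LS := mkLS (fun i => coef x i / 2) (LS_half_lb x).

Lemma LS_pos_half (x : LS) : LS_pos x -> LS_pos (LS_half x).
Proof.
  intros [n [Hn Hlow]]; exists n; simpl; split; [lra |].
  intros m Hm; rewrite Hlow by exact Hm; lra.
Qed.

Lemma LS_half_lt (x : LS) : LS_pos x -> LS_lt (LS_half x) x.
Proof.
  intros Hx; unfold LS_lt.
  replace (LS_sub x (LS_half x)) with (LS_half x) by (apply LS_ext; intros i; simpl; lra).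
  exact (LS_pos_half x Hx).
Qed.

Definition LS_infinitesimal (x : LS) : Prop :=
  forall i : Z, (i <= 0)%Z -> coef x i = 0.

Lemma LS_infinitesimal_sub (x y : LS) :
  LS_infinitesimal x -> LS_infinitesimal y -> LS_infinitesimal (LS_sub x y).
Proof. intros Hx Hy i Hi; simpl; rewrite Hx, Hy by exact Hi; lra. Qed.

Lemma LS_infinitesimal_abs (x : LS) :
  LS_infinitesimal x -> LS_infinitesimal (LS_abs x).
Proof.
  intros Hx i Hi; unfold LS_abs.
  destruct (excluded_middle_informative _); simpl; rewrite Hx by exact Hi; lra.
Qed.

Lemma LS_infinitesimal_lt_cst (x : LS) (r : R) :
  0 < r -> LS_infinitesimal x -> LS_lt x (LS_cst r).
Proof.
  intros Hr Hx; exists 0%Z; simpl; split.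
  - rewrite Hx by lia; simpl; lra.
  - intros m Hm; rewrite Hx by lia; destruct (Z.eqb_spec m 0); [lia | lra].
Qed.

Lemma LS_infinitesimal_zero : LS_infinitesimal LS_zero.
Proof. intros i _; simpl; destruct (Z.eqb i 0); reflexivity. Qed.

Lemma ED_CLASS_infinitesimal_valued (f : LS -> LS) :
  (forall x, LS_infinitesimal (f x)) -> ED_CLASS f.
Proof.
  intros Hf a n Hn; exists 1%nat; split; [lia |]; intros x _.
  apply LS_infinitesimal_lt_cst.
  - apply Rinv_0_lt_compat, lt_0_INR; exact Hn.
  - apply LS_infinitesimal_abs, LS_infinitesimal_sub; apply Hf.
Qed.

Definition LS_step (h x : LS) : LS :=
  if excluded_middle_informative (LS_pos x) then h else LS_zero.

Lemma LS_step_pos (h x : LS) : LS_pos x -> LS_step h x = h.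
Proof. unfold LS_step; destruct (excluded_middle_informative _); tauto. Qed.

Lemma LS_step_zero (h : LS) : LS_step h LS_zero = LS_zero.
Proof.
  unfold LS_step; destruct (excluded_middle_informative _) as [H0 |]; [| reflexivity].
  exfalso; exact (LS_pos_zero H0).
Qed.

Lemma ED_CLASS_step (h : LS) : LS_infinitesimal h -> ED_CLASS (LS_step h).
Proof.
  intros Hh; apply ED_CLASS_infinitesimal_valued; intros x; unfold LS_step.
  destruct (excluded_middle_informative _); [exact Hh | exact LS_infinitesimal_zero].
Qed.

Lemma not_ED_step (h : LS) : LS_pos h -> ~ ED (LS_step h).
Proof.
  intros Hh HED.
  destruct (HED LS_zero h (proj2 (LS_lt0 h) Hh)) as [d [Hd Hcont]].
  apply (proj1 (LS_lt0 d)) in Hd.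
  specialize (Hcont (LS_half d)).
  rewrite LS_step_zero, LS_step_pos, !LS_sub0, !LS_abs_pos in Hcont
    by auto using LS_pos_half.
  exact (LS_lt_irrefl h (Hcont (LS_half_lt d Hd))).
Qed.

Lemma LS_eps_lb :
  exists k : Z, forall i : Z, (i < k)%Z -> (if Z.eqb i 1 then 1 else 0) = 0.
Proof. exists 0%Z; intros i Hi; destruct (Z.eqb_spec i 1); [lia | reflexivity]. Qed.

Definition LS_eps : LS := mkLS (fun i => if Z.eqb i 1 then 1 else 0) LS_eps_lb.

Lemma LS_eps_pos : LS_pos LS_eps.
Proof.
  exists 1%Z; simpl; split; [lra |].
  intros m Hm; destruct (Z.eqb_spec m 1); [lia | reflexivity].
Qed.

Lemma LS_eps_infinitesimal : LS_infinitesimal LS_eps.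
Proof. intros i Hi; simpl; destruct (Z.eqb_spec i 1); [lia | reflexivity]. Qed.

Theorem mainTheorem5 : exists f : LS -> LS, ED_CLASS f /\ ~ ED f.
Proof.
  exists (LS_step LS_eps); split.
  - exact (ED_CLASS_step LS_eps LS_eps_infinitesimal).
  - exact (not_ED_step LS_eps LS_eps_pos).
Qed.
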